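(* Let $\Gamma$, $c$, $r$, $M$ and $\mathcal{A}$ be as in the preceding setting (the generic canonical $\Gamma$ with diagonal part and lower Jordan blocks, and the solution $(r,M)=(r,FGH)$ of $(pI-\Gamma)\tilde r=(pI+\Gamma)r$, $(qI-\Gamma)\hat r=(qI+\Gamma)r$, $M\Gamma+\Gamma M=rc$), and let $(r',M')=(\mathcal{A}r,\mathcal{A}M)$. Fix $(n,m)$ with $I+M'(n,m)$ invertible. Then for all $i,j\in\mathbb{Z}$ the quantity $S^{(i,j)}=c\,\Gamma^j(I+M')^{-1}\Gamma^i r'$ satisfies $S^{(i,j)}=S^{(j,i)}$.
   Context: Setting: $p,q\in\mathbb{C}$; $\Gamma=\mathrm{Diag}(\mathrm{Diag}(k_1,\dots,k_{N_1}),\Gamma^{[N_2]}_J(\kappa_2),\dots,\Gamma^{[N_s]}_J(\kappa_s))$, where $\Gamma^{[N]}_J(\kappa)$ is the $N\times N$ matrix with $\kappa$ on the diagonal and $1$ on the subdiagonal; all eigenvalues $\lambda,\mu$ of $\Gamma$ satisfy $\lambda+\mu\ne0$ (so $\Gamma$ is invertible) and $p,q\notin\{\pm\lambda\}$. $c=(c^{(1)},\dots,c^{(s)})$ constant, blocks of lengths $N_1,\dots,N_s$. Plane wave factor $\rho(k)=\big(\tfrac{p+k}{p-k}\big)^n\big(\tfrac{q+k}{q-k}\big)^m\rho^0$, $\rho_i=\rho(k_i)$. $r=(\rho_1,\dots,\rho_{N_1},r_J(\kappa_2),\dots,r_J(\kappa_s))^T$ with $r_J(\kappa)=(\rho,\partial_k\rho/1!,\dots,\partial_k^{N_j-1}\rho/(N_j-1)!)|_{k=\kappa}$.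 $M=FGH$ with $F=\mathrm{Diag}(\rho_1,\dots,\rho_{N_1},F_J(\kappa_2),\dots,F_J(\kappa_s))$, $F_J(\kappa)$ lower triangular with $(i,j)$ entry $\partial_k^{i-j}\rho|_{k=\kappa}/(i-j)!$; $H=\mathrm{Diag}(c_1,\dots,c_{N_1},H_J(c^{(2)}),\dots,H_J(c^{(s)}))$, $H_J(d_1,\dots,d_N)$ with $(i,j)$ entry $d_{i+j-1}$ if $i+j-1\le N$ else $0$; $G$ symmetric block matrix with $G_{1,1}=(\frac1{k_i+k_j})$, $G_{1,j}=G_{j,1}^T$ having $(l,t)$ entry $-\big(\frac{-1}{k_l+\kappa_j}\big)^t$, and $G_{i,j}=G_{j,i}^T$ ($1<i\le j$) having $(l,t)$ entry $\binom{l+t-2}{l-1}\frac{(-1)^{l+t}}{(\kappa_i+\kappa_j)^{l+t-1}}$. $\mathcal{A}=\mathrm{Diag}(I_{N_1},\mathcal{A}_2,\dots,\mathcal{A}_s)$ with each $\mathcal{A}_j$ a constant lower triangular Toeplitz matrix (possibly all identities). $\tilde{}$, $\hat{}$ denote shifts in $n$, $m$. *)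

From HB Require Import structures.
From mathcomp Require Import all_boot all_order all_algebra.
Set Implicit Arguments. Unset Strict Implicit. Unset Printing Implicit Defensive.
Import Order.TTheory GRing.Theory Num.Theory.
Local Open Scope ring_scope.

Section Defs.
Variable R : fieldType.

(* rho(k) = ((p+k)/(p-k))^n ((q+k)/(q-k))^m rho0  with n m : int.
   Writing n = n+ - n-, m = m+ - m-, rho(k) = rho_num(k) / rho_den(k) with  *)
Definition int_pos (z : int) : nat := if z is Posz k then k else 0%N.
Definition int_neg (z : int) : nat := if z is Negz k then k.+1 else 0%N.

Definition rho_num (p q rho0 : R) (n m : int) : {poly R} :=
  rho0 *: (('X + p%:P) ^+ int_pos n * (p%:P - 'X) ^+ int_neg n
          * ('X + q%:P) ^+ int_pos m * (q%:P - 'X) ^+ int_neg m).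
Definition rho_den (p q : R) (n m : int) : {poly R} :=
  (p%:P - 'X) ^+ int_pos n * ('X + p%:P) ^+ int_neg n
  * (q%:P - 'X) ^+ int_pos m * ('X + q%:P) ^+ int_neg m.

(* Taylor coefficients  (d^d/dk^d (A/B))(x) / d!  of a rational function A/B
   at a point x with B(x) <> 0.  They are determined by the general Leibniz
   rule applied to B * (A/B) = A, with the Hasse derivatives
   nderivn d P = P^(d)/d! of polynomials:
      A^[d](x) = sum_(i <= d) B^[d-i](x) * (A/B)^[i](x).                    *)
Fixpoint taylor_seq (A B : {poly R}) (x : R) (d : nat) : seq R :=
  match d with
  | 0%N => [:: A.[x] / B.[x]]
  | d'.+1 =>
      let s := taylor_seq A B x d' in
      rcons s (((nderivn d A).[x]
                - \sum_(i < d) (nderivn (d - i) B).[x] * s`_i) / B.[x])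
  end.
Definition taylor_coef (A B : {poly R}) (x : R) (d : nat) : R :=
  (taylor_seq A B x d)`_d.

Definition rhoD (p q rho0 : R) (n m : int) (kap : R) (d : nat) : R :=
  taylor_coef (rho_num p q rho0 n m) (rho_den p q n m) kap d.

Definition jordan_blk (kap : R) (N : nat) : 'M[R]_N :=
  \matrix_(l < N, t < N)
    (if l == t :> nat then kap else if l == t.+1 :> nat then 1 else 0).

(* r_J(kappa) = (rho, d rho/1!, ..., d^{N-1} rho/(N-1)!) at kappa *)
Definition rJ (rho : nat -> R) (N : nat) : 'cV[R]_N := \col_(l < N) rho l.

Definition FJ (rho : nat -> R) (N : nat) : 'M[R]_N :=
  \matrix_(l < N, t < N) (if (t <= l)%N then rho (l - t)%N else 0).

Definition rv_nth (N : nat) (d : 'rV[R]_N) (k : nat) : R :=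
  if insub k is Some i then d 0 i else 0.

(* H_J(d_1,...,d_N): (i,j) entry d_{i+j-1} if i+j-1 <= N (1-indexed) *)
Definition HJ (N : nat) (d : 'rV[R]_N) : 'M[R]_N :=
  \matrix_(l < N, t < N) rv_nth d (l + t).

(* G_{i,j}: (l,t) entry binom(l+t-2,l-1) (-1)^{l+t} / (ki+kj)^{l+t-1}
   (1-indexed); written 0-indexed.  For 1x1 blocks this is 1/(ki+kj), and
   for a 1 x N block it is -(-1/(k+kj))^t: G_{1,1}, G_{1,j}, G_{j,1} of the
   paper are the special cases with blocks of size 1. *)
Definition Gblk (ki kj : R) (Ni Nj : nat) : 'M[R]_(Ni, Nj) :=
  \matrix_(l < Ni, t < Nj)
    ('C(l + t, l)%:R * (-1) ^+ (l + t) / (ki + kj) ^+ (l + t).+1).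

Definition toeplitz_lt (a : nat -> R) (N : nat) : 'M[R]_N :=
  \matrix_(l < N, t < N) (if (t <= l)%N then a (l - t)%N else 0).

Definition mxpowz (N : nat) (A : 'M[R]_N) (z : int) : 'M[R]_N :=
  match z with
  | Posz k => A ^+ k
  | Negz k => invmx (A ^+ k.+1)
  end.

(* Blocks are indexed by 'I_(N1 + s): the first N1 blocks are the 1x1 blocks
   k_1,...,k_{N1} of Diag(k_1,...,k_{N1}); block N1 + j is the Jordan block
   Gamma_J^{[Ns j]}(kap j)  (j : 'I_s corresponds to the paper's blocks 2..s). *)
Section Blocks.
Variables (N1 s : nat) (ks : 'I_N1 -> R) (Ns : 'I_s -> nat) (kap : 'I_s -> R).

Definition bsz (b : 'I_(N1 + s)) : nat :=
  match split b with inl _ => 1%N | inr j => Ns j end.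
Definition bkap (b : 'I_(N1 + s)) : R :=
  match split b with inl i => ks i | inr j => kap j end.

Notation Ntot := (\sum_(b < N1 + s) bsz b)%N.

Definition Gam : 'M[R]_Ntot := \mxdiag_(b < N1 + s) jordan_blk (bkap b) (bsz b).

Variables (p q rho0 : R) (n m : int).

Definition rvec : 'cV[R]_Ntot :=
  \mxcol_(b < N1 + s) rJ (rhoD p q rho0 n m (bkap b)) (bsz b).
Definition Fmx : 'M[R]_Ntot :=
  \mxdiag_(b < N1 + s) FJ (rhoD p q rho0 n m (bkap b)) (bsz b).
Definition Gmx : 'M[R]_Ntot :=
  \mxblock_(b < N1 + s, b' < N1 + s) Gblk (bkap b) (bkap b') (bsz b) (bsz b').

Variable c : 'rV[R]_Ntot.
Definition Hmx : 'M[R]_Ntot := \mxdiag_(b < N1 + s) HJ (submxrow c b).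

Definition Mmx : 'M[R]_Ntot := Fmx *m Gmx *m Hmx.

Variable a : 'I_s -> nat -> R.
Definition bA (b : 'I_(N1 + s)) : nat -> R :=
  match split b with inl _ => fun l => (l == 0%N)%:R | inr j => a j end.
Definition Acal : 'M[R]_Ntot := \mxdiag_(b < N1 + s) toeplitz_lt (bA b) (bsz b).

Definition rvec' : 'cV[R]_Ntot := Acal *m rvec.
Definition Mmx' : 'M[R]_Ntot := Acal *m Mmx.

Definition Sij (i j : int) : 'M[R]_1 :=
  c *m mxpowz Gam j *m invmx (1%:M + Mmx') *m mxpowz Gam i *m rvec'.

End Blocks.
End Defs.

From HB Require Import structures.
From mathcomp Require Import all_boot all_order all_algebra zify.
Import Order.TTheory GRing.Theory Num.Theory.
Local Open Scope ring_scope.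
Set Implicit Arguments. Unset Strict Implicit. Unset Printing Implicit Defensive.

(* The symmetry S^(i,j) = S^(j,i) is a purely algebraic consequence of the
   shape of the data.
   Write F' = A F, e for the column vector whose blocks are the first unit
   vectors, and K = H F'.  Then

     r' = F' e,   c = e^T H,   G^T = G,   H^T = H,   H F' = F'^T H,

   and Gamma commutes with F' and satisfies H Gamma = Gamma^T H.  Moving
   (I + F' G H)^-1 past F' turns S^(i,j) into e^T (Gamma^j)^T W Gamma^i e
   with W = K (I + G K)^-1 symmetric, and transposing this 1x1 matrix
   exchanges i and j (Section AbstractSymmetry).
   The structural identities hold block by block: every block of Gamma, F
   and A is a lower triangular Toeplitz matrix, i.e. a polynomial in the
   nilpotent shift Z, so all of them commute, and every block of H is a
   Hankel matrix, for which H T is symmetric whenever T is Toeplitz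
   (Section ToeplitzHankel). *)

Section MatrixIdentities.
Variables (R : fieldType) (n : nat).

Lemma unitmx_1DM_swap (X Y : 'M[R]_n) :
  (1%:M + X *m Y) \in unitmx -> (1%:M + Y *m X) \in unitmx.
Proof.
move=> U.
have E : (1%:M + Y *m X) *m Y = Y *m (1%:M + X *m Y).
  by rewrite mulmxDl mulmxDr mul1mx mulmx1 mulmxA.
have Hright : (1%:M + Y *m X) *m (1%:M - Y *m invmx (1%:M + X *m Y) *m X) = 1%:M.
  rewrite mulmxBr mulmx1 -!mulmxA (mulmxA _ Y) E -mulmxA (mulmxA _ (invmx _)).
  by rewrite (mulmxV U) mul1mx addrK.
by case: (mulmx1_unit Hright).
Qed.

Lemma invmx_1DM_push (X Y : 'M[R]_n) : (1%:M + X *m Y) \in unitmx ->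
  invmx (1%:M + X *m Y) *m X = X *m invmx (1%:M + Y *m X).
Proof.
move=> U; have V := unitmx_1DM_swap U.
have E : (1%:M + X *m Y) *m X = X *m (1%:M + Y *m X).
  by rewrite mulmxDl mulmxDr mul1mx mulmx1 mulmxA.
apply: (canRL (mulmxK V)).
by rewrite -mulmxA -E mulKmx.
Qed.

Lemma resolvent_tr (K G : 'M[R]_n) : K^T = K -> G^T = G ->
  (K *m invmx (1%:M + G *m K))^T = K *m invmx (1%:M + G *m K).
Proof.
move=> KT GT.
rewrite trmx_mul trmx_inv raddfD /= trmx1 trmx_mul KT GT.
case U : (1%:M + K *m G \in unitmx); first by rewrite invmx_1DM_push.
have V : (1%:M + G *m K \in unitmx) = false.
  by apply: negbTE; apply: contraFN U; apply: unitmx_1DM_swap.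
by rewrite !invmx_out ?inE ?U ?V // mulmxDl mulmxDr mul1mx mulmx1 mulmxA.
Qed.

Lemma trmx11 (M : 'M[R]_1) : M^T = M.
Proof. by apply/matrixP => i j; rewrite mxE !ord1. Qed.

Definition compatible (H F X : 'M[R]_n) := X *m F = F *m X /\ H *m X = X^T *m H.

Lemma compatible_mul H F X Y : compatible H F X -> compatible H F Y ->
  X *m Y = Y *m X -> compatible H F (X *m Y).
Proof.
move=> [XF HX] [YF HY] XY; split.
  by rewrite -mulmxA YF !mulmxA XF.
by rewrite mulmxA HX -mulmxA HY mulmxA -trmx_mul XY.
Qed.

Lemma compatible_inv H F X : compatible H F X -> compatible H F (invmx X).
Proof.
move=> [XF HX]; case U : (X \in unitmx); last by rewrite invmx_out ?inE ?U.
split.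
  rewrite -[invmx X *m F]mulmx1 -(mulmxV U) !mulmxA -(mulmxA _ F) -XF.
  by rewrite (mulmxA _ X) (mulVmx U) mul1mx.
have UT : X^T \in unitmx by rewrite unitmx_tr.
rewrite trmx_inv -[H *m invmx X]mul1mx -(mulVmx UT) -!mulmxA (mulmxA _ H) -HX.
by rewrite -(mulmxA H) (mulmxV U) mulmx1.
Qed.

Lemma compatible_powz H F X : compatible H F X ->
  forall z, compatible H F (mxpowz X z).
Proof.
move=> cX.
have cXk k : compatible H F (X ^+ k).
  elim: k => [|k IH].
    by rewrite expr0; split; rewrite ?trmx1 mulmx1 mul1mx.
  by rewrite exprS; apply: compatible_mul => //; rewrite mulmxE -exprS exprSr.
by case=> k /=; [exact: cXk | exact/compatible_inv/cXk].
Qed.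

End MatrixIdentities.

Section AbstractSymmetry.
Variables (R : fieldType) (n : nat) (Gm H F G : 'M[R]_n) (e : 'cV[R]_n).
Hypotheses (HT : H^T = H) (GT : G^T = G) (HF : H *m F = F^T *m H).
Hypotheses (cGm : compatible H F Gm) (U : (1%:M + F *m G *m H) \in unitmx).

Let K := H *m F.
Let W := K *m invmx (1%:M + G *m K).

Lemma K_tr : K^T = K.
Proof. by rewrite /K trmx_mul HT HF. Qed.

Lemma form_through_W (i j : int) :
  e^T *m H *m mxpowz Gm j *m invmx (1%:M + F *m G *m H) *m mxpowz Gm i *m (F *m e)
  = e^T *m (mxpowz Gm j)^T *m W *m mxpowz Gm i *m e.
Proof.
have [GiF _] := compatible_powz cGm i; have [_ HGj] := compatible_powz cGm j.
have push : invmx (1%:M + F *m G *m H) *m F = F *m invmx (1%:M + G *m K).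
  by rewrite -mulmxA invmx_1DM_push -?mulmxA // /K mulmxA.
rewrite !mulmxA -(mulmxA _ (mxpowz Gm i)) GiF !mulmxA -(mulmxA _ _ F) push.
by rewrite !mulmxA -(mulmxA (e^T) H) HGj /W /K !mulmxA.
Qed.

Lemma abstract_symmetry (c : 'rV[R]_n) (r : 'cV[R]_n) :
  c = e^T *m H -> r = F *m e -> forall i j : int,
  c *m mxpowz Gm j *m invmx (1%:M + F *m G *m H) *m mxpowz Gm i *m r
  = c *m mxpowz Gm i *m invmx (1%:M + F *m G *m H) *m mxpowz Gm j *m r.
Proof.
move=> -> -> i j.
have WT : W^T = W by apply: resolvent_tr; [exact: K_tr | exact: GT].
rewrite !form_through_W; move: WT; generalize W => W' W'T.
by rewrite -[LHS]trmx11 !trmx_mul !trmxK W'T !mulmxA.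
Qed.

End AbstractSymmetry.

Section ToeplitzHankel.
Variable R : fieldType.

Lemma sum_delta_l (N k : nat) (g : nat -> R) :
  \sum_(u < N) (((u : nat) == k)%:R * g u) = if (k < N)%N then g k else 0.
Proof.
case: ltnP => hk.
  rewrite (bigD1 (Ordinal hk)) //= eqxx mul1r big1 ?addr0 // => u hu.
  case: eqP => [uk|]; last by rewrite mul0r.
  by move/eqP: hu; case; apply: val_inj.
rewrite big1 // => u _; case: eqP => [uk|]; last by rewrite mul0r.
by move: (ltn_ord u); rewrite uk; lia.
Qed.

Lemma sum_delta_r (N k : nat) (g : nat -> R) :
  \sum_(u < N) (g u * ((u : nat) == k)%:R) = if (k < N)%N then g k else 0.
Proof. by rewrite -sum_delta_l; apply: eq_bigr => u _; rewrite mulrC. Qed.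

Definition shiftmx (N : nat) : 'M[R]_N := \matrix_(l < N, t < N) ((l : nat) == t.+1)%:R.

Lemma shiftmx_pow N k :
  shiftmx N ^+ k = \matrix_(l < N, t < N) ((l : nat) == (t + k)%N)%:R.
Proof.
elim: k => [|k IH]; apply/matrixP => l t; first by rewrite !mxE addn0.
rewrite exprSr -mulmxE IH !mxE.
under eq_bigr do rewrite !mxE.
rewrite (sum_delta_r _ _ (fun u => ((l : nat) == (u + k)%N)%:R)).
case: ltnP => h; first by rewrite addSnnS.
by case: eqP => // lE; move: (ltn_ord l); rewrite lE; lia.
Qed.

Lemma toeplitz_shift (a : nat -> R) N :
  toeplitz_lt a N = \sum_(k < N) a k *: shiftmx N ^+ k.
Proof.
apply/matrixP => l t; rewrite !mxE summxE.
under eq_bigr do rewrite !mxE shiftmx_pow mxE.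
transitivity (\sum_(k < N)
    (((k : nat) == (l - t)%N)%:R * (if (t <= l)%N then a k else 0))).
  rewrite (sum_delta_l _ _ (fun k => if (t <= l)%N then a k else 0)).
  by have -> : (l - t < N)%N by move: (ltn_ord l); lia.
apply: eq_bigr => k _; case: leqP => h.
  have -> : ((l : nat) == (t + k)%N) = ((k : nat) == (l - t)%N).
    by apply/eqP/eqP; lia.
  by rewrite mulrC.
have -> : ((l : nat) == (t + k)%N) = false by apply/eqP; lia.
by rewrite !mulr0.
Qed.

Lemma toeplitz_comm (a b : nat -> R) N :
  toeplitz_lt a N *m toeplitz_lt b N = toeplitz_lt b N *m toeplitz_lt a N.
Proof.
rewrite !toeplitz_shift mulmxE.
apply: commr_sum => j _; apply: commr_sym; apply: commr_sum => k _.
rewrite /GRing.comm -mulmxE -!scalemxAl -!scalemxAr !scalerA mulmxE -!exprD.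
by rewrite addnC mulrC.
Qed.

Definition jordan_symbol (kap : R) (k : nat) : R :=
  if k == 0%N then kap else if k == 1%N then 1 else 0.

Lemma jordan_toeplitz kap N : jordan_blk kap N = toeplitz_lt (jordan_symbol kap) N.
Proof.
apply/matrixP => l t; rewrite !mxE /jordan_symbol.
case: leqP => h.
  have -> : ((l : nat) == t) = (l - t == 0)%N by apply/eqP/eqP; lia.
  by have -> : ((l : nat) == t.+1) = (l - t == 1)%N by apply/eqP/eqP; lia.
have -> : ((l : nat) == t) = false by apply/eqP; lia.
by have -> : ((l : nat) == t.+1) = false by apply/eqP; lia.
Qed.

Lemma FJ_toeplitz (rho : nat -> R) N : FJ rho N = toeplitz_lt rho N.
Proof. by []. Qed.

Lemma rv_nth_out N (d : 'rV[R]_N) k : (N <= k)%N -> rv_nth d k = 0.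
Proof. by move=> h; rewrite /rv_nth insubN // -leqNgt. Qed.

Lemma rv_nth_ord N (d : 'rV[R]_N) (k : 'I_N) : rv_nth d k = d 0 k.
Proof. by rewrite /rv_nth valK. Qed.

Definition shift_symbol N (d : 'rV[R]_N) : 'rV[R]_N := \row_(t < N) rv_nth d t.+1.

Lemma rv_nth_shift N (d : 'rV[R]_N) k : rv_nth (shift_symbol d) k = rv_nth d k.+1.
Proof.
case: (ltnP k N) => h; first by rewrite /rv_nth insubT /= mxE.
by rewrite !rv_nth_out //; lia.
Qed.

Lemma HJ_shift N (d : 'rV[R]_N) : HJ d *m shiftmx N = HJ (shift_symbol d).
Proof.
apply/matrixP => l t; rewrite !mxE.
under eq_bigr do rewrite !mxE.
rewrite (sum_delta_r _ _ (fun u => rv_nth d (l + u)%N)) rv_nth_shift.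
case: ltnP => h; first by rewrite addnS.
by rewrite rv_nth_out //; move: (ltn_ord l); lia.
Qed.

Lemma HJ_shift_pow N (d : 'rV[R]_N) k :
  HJ d *m shiftmx N ^+ k = HJ (iter k (@shift_symbol N) d).
Proof.
elim: k => [|k IH]; first by rewrite expr0 mulmx1.
by rewrite exprSr -mulmxE mulmxA IH HJ_shift.
Qed.

Lemma HJ_tr N (d : 'rV[R]_N) : (HJ d)^T = HJ d.
Proof. by apply/matrixP => l t; rewrite !mxE addnC. Qed.

Lemma HJ_toeplitz_tr N (d : 'rV[R]_N) (a : nat -> R) :
  (HJ d *m toeplitz_lt a N)^T = HJ d *m toeplitz_lt a N.
Proof.
rewrite toeplitz_shift mulmx_sumr raddf_sum; apply: eq_bigr => k _.
by rewrite -scalemxAr HJ_shift_pow /= linearZ /= HJ_tr.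
Qed.

Lemma HJ_toeplitz N (d : 'rV[R]_N) (a : nat -> R) :
  HJ d *m toeplitz_lt a N = (toeplitz_lt a N)^T *m HJ d.
Proof. by rewrite -[LHS]HJ_toeplitz_tr trmx_mul HJ_tr. Qed.

Definition unit_first N : 'cV[R]_N := \col_(l < N) ((l : nat) == 0%N)%:R.

Lemma toeplitz_unit_first (a : nat -> R) N :
  toeplitz_lt a N *m unit_first N = \col_(l < N) a l.
Proof.
apply/matrixP => l t; rewrite !mxE.
under eq_bigr do rewrite !mxE.
rewrite (sum_delta_r _ _ (fun u => if (u <= l)%N then a (l - u)%N else 0)).
by rewrite (leq_ltn_trans (leq0n l) (ltn_ord l)) subn0.
Qed.

Lemma unit_first_HJ N (d : 'rV[R]_N) : (unit_first N)^T *m HJ d = d.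
Proof.
apply/matrixP => i t; rewrite !mxE ord1.
under eq_bigr do rewrite !mxE.
rewrite (sum_delta_l _ _ (fun u => rv_nth d (u + t)%N)).
by rewrite (leq_ltn_trans (leq0n t) (ltn_ord t)) add0n rv_nth_ord.
Qed.

End ToeplitzHankel.

Section Assembly.
Variable R : fieldType.

Lemma mul_mxdiag (k : nat) (p_ : 'I_k -> nat) (B C : forall i, 'M[R]_(p_ i)) :
  \mxdiag_i B i *m \mxdiag_i C i = \mxdiag_i (B i *m C i).
Proof.
rewrite {2}/mxdiag mul_mxdiag_mxblock /mxdiag; apply: eq_mxblock => i j.
case: eqVneq => [<-|_]; last by rewrite mulmx0.
by rewrite !conform_mx_id.
Qed.

Lemma Gblk_tr (ki kj : R) Ni Nj : (Gblk ki kj Ni Nj)^T = Gblk kj ki Nj Ni.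
Proof.
apply/matrixP => l t; rewrite !mxE addnC addrC.
by rewrite -{1}bin_sub ?leq_addl // addnK.
Qed.

Variables (N1 s : nat) (ks : 'I_N1 -> R) (Ns : 'I_s -> nat) (kap : 'I_s -> R).
Variables (p q rho0 : R) (n m : int).
Variables (c : 'rV[R]_(\sum_(b < N1 + s) bsz Ns b)) (a : 'I_s -> nat -> R).

Definition Fmx' := Acal N1 Ns a *m Fmx ks Ns kap p q rho0 n m.
Definition evec := \mxcol_(b < N1 + s) unit_first R (bsz Ns b).

Lemma Mmx'_factor : Mmx' ks kap p q rho0 n m c a = Fmx' *m Gmx ks Ns kap *m Hmx c.
Proof. by rewrite /Mmx' /Mmx /Fmx' !mulmxA. Qed.

Lemma Hmx_tr : (Hmx c)^T = Hmx c.
Proof. by rewrite /Hmx tr_mxdiag; apply: eq_mxdiag => b; rewrite HJ_tr. Qed.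

Lemma Gmx_tr : (Gmx ks Ns kap)^T = Gmx ks Ns kap.
Proof. by rewrite /Gmx tr_mxblock; apply: eq_mxblock => b b'; rewrite Gblk_tr. Qed.

Lemma Hmx_Fmx' : Hmx c *m Fmx' = Fmx'^T *m Hmx c.
Proof.
rewrite /Fmx' /Hmx /Acal /Fmx trmx_mul !tr_mxdiag !mulmxA !mul_mxdiag.
apply: eq_mxdiag => b; rewrite FJ_toeplitz HJ_toeplitz -mulmxA HJ_toeplitz.
by rewrite mulmxA -trmx_mul toeplitz_comm trmx_mul.
Qed.

Lemma Gam_compatible : compatible (Hmx c) Fmx' (Gam ks Ns kap).
Proof.
split.
  rewrite /Fmx' /Gam /Acal /Fmx !mulmxA !mul_mxdiag; apply: eq_mxdiag => b.
  rewrite FJ_toeplitz jordan_toeplitz -mulmxA -toeplitz_comm mulmxA.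
  by rewrite toeplitz_comm -!mulmxA toeplitz_comm.
rewrite /Gam /Hmx tr_mxdiag !mul_mxdiag; apply: eq_mxdiag => b.
by rewrite jordan_toeplitz HJ_toeplitz.
Qed.

Lemma rvec'_factor : rvec' ks Ns kap p q rho0 n m a = Fmx' *m evec.
Proof.
rewrite /rvec' /Fmx' -mulmxA; congr (_ *m _).
rewrite /Fmx /evec mul_mxdiag_mxcol /rvec; apply: eq_mxcol => b.
by rewrite FJ_toeplitz toeplitz_unit_first.
Qed.

Lemma c_factor : c = evec^T *m Hmx c.
Proof.
rewrite /evec tr_mxcol /Hmx mul_mxrow_mxdiag.
under eq_mxrow do rewrite unit_first_HJ.
by rewrite submxrowK.
Qed.

End Assembly.

(* The spectral hypotheses of the setting guarantee that M = FGH solves the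
   Sylvester equation; the symmetry itself only uses the factorization. *)
Theorem theorem4 (R : numClosedFieldType)
  (N1 s : nat) (ks : 'I_N1 -> R) (Ns : 'I_s -> nat) (kap : 'I_s -> R)
  (p q rho0 : R) (n m : int)
  (c : 'rV[R]_(\sum_(b < N1 + s) bsz Ns b))
  (a : 'I_s -> nat -> R)
  (Heig : forall lam mu : R,
      eigenvalue (Gam ks Ns kap) lam -> eigenvalue (Gam ks Ns kap) mu ->
      lam + mu != 0)
  (Hp : forall lam : R, eigenvalue (Gam ks Ns kap) lam -> (p != lam) && (p != - lam))
  (Hq : forall lam : R, eigenvalue (Gam ks Ns kap) lam -> (q != lam) && (q != - lam))
  (Hinv : (1%:M + Mmx' ks kap p q rho0 n m c a) \in unitmx) :
  forall i j : int,
    Sij ks kap p q rho0 n m c a i j = Sij ks kap p q rho0 n m c a j i.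
Proof.
move=> i j; rewrite /Sij Mmx'_factor; rewrite Mmx'_factor in Hinv.
have HF := Hmx_Fmx' ks kap p q rho0 n m c a.
have cGam := Gam_compatible ks kap p q rho0 n m c a.
have rE := rvec'_factor ks Ns kap p q rho0 n m a.
exact: (abstract_symmetry (Hmx_tr c) (Gmx_tr ks Ns kap) HF cGam Hinv (c_factor c) rE).
Qed.
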